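(* The class of data languages accepted by SAFA is not closed under intersection: there exist data languages $L_1,L_2\subseteq(\Sigma\times D)^*$, each accepted by some SAFA, such that no SAFA accepts $L_1\cap L_2$.
   Context: $D$ is a fixed countably infinite set of data values; for a finite alphabet $\Sigma$, data words are elements of $(\Sigma\times D)^*$. A set augmented finite automaton (SAFA) is a tuple $M=(Q,\Sigma\times D,q_0,F,H,\delta)$: $Q$ finite set of states, $q_0\in Q$ initial, $F\subseteq Q$ final, $H=\{h_1,\dots,h_m\}$ a finite collection of (names of) sets of data values, $\delta\subseteq Q\times\Sigma\times C\times OP\times Q$ with $C=\{p(h_i),\,!p(h_i): h_i\in H\}$, $OP=\{-\}\cup\{\mathsf{ins}(h_i):h_i\in H\}$. Configurations are $(q,\langle S_1,\dots,S_m\rangle)$ with $S_i\subseteq D$ finite; initially state $q_0$ and all sets empty. On reading $(a,d)$, a transition $(q,a,\alpha,op,q')$ from the current state may be taken if $\alpha=p(h_i)$ and $d\in S_i$, or $\alpha=\,!p(h_i)$ and $d\notin S_i$; then the state becomes $q'$ and if $op=\mathsf{ins}(h_j)$ the value $d$ is added to $S_j$ ($op=-$ changes nothing). A word is accepted if some run reads it entirely and ends in $F$; $L(M)$ is the set of accepted words. *)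

From HB Require Import structures.
From mathcomp Require Import all_boot.
Set Implicit Arguments. Unset Strict Implicit. Unset Printing Implicit Defensive.

(* Data values: the fixed countably infinite set D is taken to be nat. *)
Definition D := nat.

(* Conditions p(h_i) / !p(h_i): (true, i) = p(h_i), (false, i) = !p(h_i).
   Operations: None = "-", Some j = ins(h_j). *)
Definition cond (m : nat) := (bool * 'I_m)%type.
Definition op (m : nat) := option 'I_m.

Record SAFA (Sigma : finType) := {
  safa_Q : finType;
  safa_m : nat;
  safa_q0 : safa_Q;
  safa_F : {set safa_Q};
  safa_delta : {set (safa_Q * Sigma * cond safa_m * op safa_m * safa_Q)}
}.

Definition config (Sigma : finType) (M : SAFA Sigma) :=
  (safa_Q M * ('I_(safa_m M) -> seq D))%type.

Definition init_config (Sigma : finType) (M : SAFA Sigma) : config M :=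
  (safa_q0 M, fun _ => [::]).

Definition update (m : nat) (S : 'I_m -> seq D) (o : op m) (d : D) :
  'I_m -> seq D :=
  fun j => if o == Some j then d :: S j else S j.

Definition step (Sigma : finType) (M : SAFA Sigma) (c : config M)
    (x : Sigma * D) (c' : config M) : Prop :=
  exists (q' : safa_Q M) (b : bool) (i : 'I_(safa_m M)) (o : op (safa_m M)),
    [/\ (c.1, x.1, (b, i), o, q') \in safa_delta M,
        (x.2 \in c.2 i) = b &
        c' = (q', update c.2 o x.2)].

Inductive run (Sigma : finType) (M : SAFA Sigma) :
    config M -> seq (Sigma * D) -> config M -> Prop :=
| run_nil c : run c [::] c
| run_cons c x c' w c'' : step c x c' -> run c' w c'' -> run c (x :: w) c''.

Definition accepts (Sigma : finType) (M : SAFA Sigma) (w : seq (Sigma * D)) : Prop :=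
  exists c, run (init_config M) w c /\ c.1 \in safa_F M.

Definition accepted_by (Sigma : finType) (L : seq (Sigma * D) -> Prop) (M : SAFA Sigma) :=
  forall w, L w <-> accepts M w.

From mathcomp Require Import all_boot.
Set Implicit Arguments. Unset Strict Implicit. Unset Printing Implicit Defensive.

(* Take L1 = four-letter words whose first three data values are pairwise
   distinct and L2 = four-letter words whose last data value is the first one;
   each is accepted by a chain of five states using a single set.  A run of a
   SAFA is a sequence of moves, each performing one membership test and at most
   one insertion, and a word is accepted along given moves iff the tests
   answer as the moves require.  Fix an accepting run on 0 1 2 0 for L1 /\ L2.
   If 0 is not inserted at step 1 into the set tested at step 4, then 0 1 2 3
   gets the same answers; if 1 is not inserted at step 2 into the set tested at
   step 3, then so does 0 1 1 0.  Otherwise, since 0 enters only one set, the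
   sets tested at steps 3 and 4 either coincide, and 0 1 2 1 is confused with
   0 1 2 0, or differ, and 0 1 0 0 is. *)

Lemma mem_update (m : nat) (S : 'I_m -> seq D) (o : op m) (x d : D) j :
  (d \in update S o x j) = ((o == Some j) && (d == x)) || (d \in S j).
Proof. by rewrite /update; case: eqP => _ //=; rewrite inE. Qed.

Definition empty_sets {m : nat} : 'I_m -> seq D := fun=> [::].

Fixpoint outcomes (m : nat) (T : Type) (S : 'I_m -> seq D)
    (ms : seq (cond m * op m * T)) (ds : seq D) : seq bool :=
  if ms is (c, o, _) :: ms' then
    if ds is d :: ds' then (d \in S c.2) :: outcomes (update S o d) ms' ds' else [::]
  else [::].

Definition expected (m : nat) (T : Type) (ms : seq (cond m * op m * T)) : seq bool :=
  [seq mv.1.1.1 | mv <- ms].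

Section Moves.
Variables (Sigma : finType) (M : SAFA Sigma).

Definition move := (cond (safa_m M) * op (safa_m M) * safa_Q M)%type.

Fixpoint legal (q : safa_Q M) (ms : seq move) (s : seq Sigma) : bool :=
  match ms, s with
  | [::], [::] => q \in safa_F M
  | (c, o, q') :: ms', a :: s' => ((q, a, c, o, q') \in safa_delta M) && legal q' ms' s'
  | _, _ => false
  end.

Lemma legal_size q ms s : legal q ms s -> size ms = size s.
Proof.
by elim: ms q s => [|[[c o] q'] ms IH] q [|a s] //= /andP [_ /IH ->].
Qed.

Lemma run_nil_inv (c c' : config M) : run c [::] c' -> c' = c.
Proof. by move=> R; inversion R. Qed.

Lemma run_consP (c c'' : config M) x w :
  run c (x :: w) c'' <-> exists2 c', step c x c' & run c' w c''.
Proof.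
split=> [R | [c' S R]]; last exact: run_cons S R.
by inversion R; exists c'.
Qed.

Lemma accepts_fromP (c : config M) w :
  (exists c', run c w c' /\ c'.1 \in safa_F M) <->
  exists ms, legal c.1 ms (unzip1 w) /\ outcomes c.2 ms (unzip2 w) = expected ms.
Proof.
elim: w c => [|[a d] w IH] [q S] /=.
  split=> [[c' [/run_nil_inv -> F]] | [[|[[c o] q'] ms] [F _] //]]; first by exists [::].
  by exists (q, S); split; first exact: run_nil.
split=> [[c'' [R F]] |].
  move/run_consP: R => [c' [q' [b [i [o [Ht /= Hb ->]]]]] R].
  have [ms [Hl Ho]] := (IH (q', update S o d)).1 (ex_intro _ c'' (conj R F)).
  by exists (((b, i), o, q') :: ms) => /=; rewrite Ht Hl Hb Ho.
case=> [[|[[[b i] o] q'] ms] [//= /andP [Ht Hl] [Hb Ho]]].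
have [c'' [R F]] := (IH (q', update S o d)).2 (ex_intro _ ms (conj Hl Ho)).
exists c''; split=> //; apply/run_consP; exists (q', update S o d) => //.
by exists q', b, i, o.
Qed.

Lemma acceptsP w :
  accepts M w <->
  exists ms, legal (safa_q0 M) ms (unzip1 w) /\
             outcomes empty_sets ms (unzip2 w) = expected ms.
Proof. exact: accepts_fromP (init_config M) w. Qed.

End Moves.

Section LineSafa.
Variables (Sigma : finType) (m n : nat) (allowed : nat -> cond m -> op m -> bool).

Definition line_safa : SAFA Sigma :=
  {| safa_Q := 'I_n.+1; safa_m := m; safa_q0 := ord0; safa_F := [set ord_max];
     safa_delta := [set t | let: (q, _, c, o, q') := t in
                            (val q' == (val q).+1) && allowed (val q) c o] |}.

Fixpoint line_path (k : nat) (ms : seq (cond m * op m * 'I_n.+1)) : bool :=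
  if ms is (c, o, q') :: ms' then [&& val q' == k.+1, allowed k c o & line_path k.+1 ms']
  else true.

Lemma line_legalE (q : 'I_n.+1) ms s :
  @legal _ line_safa q ms s = [&& size s == size ms, val q + size ms == n & line_path q ms].
Proof.
elim: ms q s => [|[[c o] q'] ms IH] q [|a s] //=.
- by rewrite inE addn0 andbT.
- rewrite inE IH eqSS -addSnnS; case: (val q' =P q.+1) => [E | _] /=; last by rewrite !andbF.
  by rewrite E; case: allowed; rewrite ?andbF.
Qed.

Lemma line_acceptsP w :
  accepts line_safa w <->
  exists ms, [/\ size w = n, size ms = n, line_path 0 ms &
                 outcomes empty_sets ms (unzip2 w) = expected ms].
Proof.
split=> [/acceptsP [ms [L O]] | [ms [Sw Sms P O]]].
  by exists ms; move: L; rewrite line_legalE size_map add0n => /and3P [/eqP -> /eqP -> ->].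
by apply/acceptsP; exists ms; rewrite line_legalE size_map Sw Sms P add0n eqxx.
Qed.

End LineSafa.

Arguments line_safa {Sigma m} n allowed.

Definition lang_distinct3 (w : seq (unit * D)) : Prop :=
  exists d1 d2 d3 d4, unzip2 w = [:: d1; d2; d3; d4] /\ uniq [:: d1; d2; d3].

Definition lang_return (w : seq (unit * D)) : Prop :=
  exists d1 d2 d3, unzip2 w = [:: d1; d2; d3; d1].

Definition distinct3_moves (k : nat) (c : cond 1) (o : op 1) : bool :=
  match k with
  | 0 | 1 => ~~ c.1 && (o == Some ord0)
  | 2 => ~~ c.1 && (o == None)
  | _ => o == None
  end.

Definition return_moves (k : nat) (c : cond 1) (o : op 1) : bool :=
  match k with
  | 0 => ~~ c.1 && (o == Some ord0)
  | 3 => c.1 && (o == None)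
  | _ => o == None
  end.

Lemma distinct3_accepted : accepted_by lang_distinct3 (line_safa 4 distinct3_moves).
Proof.
move=> w; split=> [[d1 [d2 [d3 [d4 [Ew]]]]] | /line_acceptsP [ms [Sw Sms P O]]].
  rewrite /= !inE negb_or => /and3P [/andP [n12 n13] n23 _].
  apply/line_acceptsP.
  exists [:: ((false, ord0), Some ord0, inord 1); ((false, ord0), Some ord0, inord 2);
             ((false, ord0), None, inord 3); ((d4 \in [:: d2; d1], ord0), None, inord 4)].
  split=> //; first by move: (congr1 size Ew); rewrite size_map.
    by rewrite /= !inordK.
  rewrite Ew /= /empty_sets !mem_update /= !in_nil !orbF.
  by rewrite eq_sym (negbTE n12) eq_sym (negbTE n23) eq_sym (negbTE n13).
have : size (unzip2 w) = 4 by rewrite size_map.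
case E: (unzip2 w) O => [|d1 [|d2 [|d3 [|d4 []]]]] // O _.
case: ms Sms P O => [|[[[b1 i1] o1] q1] [|[[[b2 i2] o2] q2]
  [|[[[b3 i3] o3] q3] [|[[[b4 i4] o4] q4] []]]]] // _ /=.
move=> /and5P [_ /andP [_ /eqP ->] _ /andP [nb2 /eqP ->] /and5P [_ /andP [nb3 /eqP ->] _ _ _]].
rewrite /empty_sets (ord1 i2) (ord1 i3) !mem_update /= !in_nil !orbF.
case=> _ Eb2 Eb3 _; move: nb2 nb3; rewrite -Eb2 -Eb3 negb_or => n21 /andP [n32 n31].
by exists d1, d2, d3, d4; rewrite /= !inE negb_or eq_sym n21 eq_sym n31 eq_sym n32.
Qed.

Lemma return_accepted : accepted_by lang_return (line_safa 4 return_moves).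
Proof.
move=> w; split=> [[d1 [d2 [d3 Ew]]] | /line_acceptsP [ms [Sw Sms P O]]].
  apply/line_acceptsP.
  exists [:: ((false, ord0), Some ord0, inord 1); ((d2 == d1, ord0), None, inord 2);
             ((d3 == d1, ord0), None, inord 3); ((true, ord0), None, inord 4)].
  split=> //; first by move: (congr1 size Ew); rewrite size_map.
    by rewrite /= !inordK.
  by rewrite Ew /= /empty_sets !mem_update /= !in_nil !orbF eqxx.
have : size (unzip2 w) = 4 by rewrite size_map.
case E: (unzip2 w) O => [|d1 [|d2 [|d3 [|d4 []]]]] // O _.
case: ms Sms P O => [|[[[b1 i1] o1] q1] [|[[[b2 i2] o2] q2]
  [|[[[b3 i3] o3] q3] [|[[[b4 i4] o4] q4] []]]]] // _ /=.
move=> /and5P [_ /andP [_ /eqP ->] _ /eqP -> /and5P [_ /eqP -> _ /andP [b4T _] _]].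
rewrite /empty_sets (ord1 i4) !mem_update /= !in_nil !orbF.
by case=> _ _ _ Eb4; exists d1, d2, d3; move: b4T; rewrite -Eb4 E => /eqP ->.
Qed.

Definition distinct3_return (ds : seq D) : bool :=
  uniq (take 3 ds) && (nth 0 ds 3 == nth 0 ds 0).

Lemma langs_distinct3_return w :
  lang_distinct3 w -> lang_return w -> distinct3_return (unzip2 w).
Proof.
move=> [d1 [d2 [d3 [d4 [E U]]]]] [e1 [e2 [e3]]]; rewrite E => -[<- _ _ ->].
by rewrite /distinct3_return /= eqxx andbT.
Qed.

Lemma distinct3_return_confusable (T : Type) m (ms : seq (cond m * op m * T)) :
  size ms = 4 ->
  exists2 ds, size ds = 4 /\ ~~ distinct3_return ds &
    outcomes empty_sets ms ds = outcomes empty_sets ms [:: 0; 1; 2; 0].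
Proof.
case: ms => [|[[c1 o1] q1] [|[[c2 o2] q2] [|[[[b3 i3] o3] q3] [|[[[b4 i4] o4] q4] []]]]] // _.
rewrite /= /empty_sets.
have [o1i4 | o1i4] := eqVneq o1 (Some i4); last first.
  by exists [:: 0; 1; 2; 3]; rewrite // !mem_update /= (negbTE o1i4).
subst o1; have [o2i3 | o2i3] := eqVneq o2 (Some i3); last first.
  by exists [:: 0; 1; 1; 0]; rewrite // !mem_update /= (negbTE o2i3).
subst o2; have [[->] | o1i3] := eqVneq (Some i4) (Some i3).
  by exists [:: 0; 1; 2; 1]; rewrite // !mem_update /= eqxx.
by exists [:: 0; 1; 0; 0]; rewrite // !mem_update /= (negbTE o1i3) !eqxx !orbT.
Qed.

Definition dword (ds : seq D) : seq (unit * D) := [seq (tt, d) | d <- ds].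

Lemma unzip1_dword ds : unzip1 (dword ds) = nseq (size ds) tt.
Proof. by elim: ds => //= d ds ->. Qed.

Lemma unzip2_dword ds : unzip2 (dword ds) = ds.
Proof. by elim: ds => //= d ds ->. Qed.

Theorem lemma6 :
  exists (Sigma : finType) (L1 L2 : seq (Sigma * D) -> Prop),
    (exists M1 : SAFA Sigma, accepted_by L1 M1) /\
    (exists M2 : SAFA Sigma, accepted_by L2 M2) /\
    ~ (exists M : SAFA Sigma, accepted_by (fun w => L1 w /\ L2 w) M).
Proof.
exists unit, lang_distinct3, lang_return.
split; first by exists (line_safa 4 distinct3_moves); exact: distinct3_accepted.
split; first by exists (line_safa 4 return_moves); exact: return_accepted.
case=> M HM.
have /acceptsP [ms [Lms Oms]] : accepts M (dword [:: 0; 1; 2; 0]).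
  by apply/HM; split; [exists 0, 1, 2, 0 | exists 0, 1, 2].
have [ds [Sds Nds] Ods] := distinct3_return_confusable (legal_size Lms).
have /HM [H1 H2] : accepts M (dword ds).
  by apply/acceptsP; exists ms; rewrite unzip1_dword unzip2_dword Sds Ods.
by move: Nds; rewrite -[ds]unzip2_dword (langs_distinct3_return H1 H2).
Qed.
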